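(* Let $\mathbf{SpFibPreord}$ denote the category whose objects are spatial fibrous preorders and whose morphisms are fibrous morphisms between them, two parallel fibrous morphisms $(f,f^* )$, $(g,g^* )$ being identified whenever $f=g$. Let $\mathbf{Top}$ be the category of topological spaces and continuous maps. Define $F\colon \mathbf{SpFibPreord}\to\mathbf{Top}$ as follows. For a spatial fibrous preorder $R\xrightarrow{\partial}A\xrightarrow{p}B$, let $F$ of it be $(B,\tau)$, where for $a\in A$ we set $N(a)=\{y\in B\mid aRy\}$ and $$\mathcal{O}\in\tau \iff \forall y\in\mathcal{O}\ \exists a\in A \text{ with } p(a)=y \text{ and } N(a)\subseteq\mathcal{O}.$$ For a morphism $(f,f^* )$, set $F(f,f^* )=f$. Define $G\colon\mathbf{Top}\to\mathbf{SpFibPreord}$ as follows. For a topological space $(B,\tau)$, let $G(B,\tau)$ be the fibrous preorder with $$A=\{(U,x)\mid x\in U\in\tau\},\qquad p(U,x)=x,\qquad (U,x)Ry\iff y\in U,\qquad \partial((U,x),y)=(U,y).$$ It is spatial via $s(x)=(B,x)$ and $m((U,x),(V,x))=(U\cap V,x)$. For a continuous map $f\colon(B,\tau)\to(B',\tau')$, let $G(f)=(f,f^* )$ with $f^*((U',x'),y)=(f^{-1}(U'),y)$ whenever $x'=f(y)$. Then $F$ and $G$ are well-defined functors, $FG=1_{\mathbf{Top}}$ (that is, $F(G(B,\tau))=(B,\tau)$ for every topological space), and $GF\sim 1$: for every spatial fibrous preorder $\mathbf{A}$, $GF(\mathbf{A})$ is equivalent to $\mathbf{A}$.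
   Context: A fibrous preorder is a sequence $R\xrightarrow{\partial}A\xrightarrow{p}B$ consisting of the following data: - sets $A$ and $B$; - a map $p\colon A\to B$; - a relation $R\subseteq A\times B$ (write $aRb$ for $(a,b)\in R$); - a map $\partial\colon R\to A$. These must satisfy, for all $a\in A$ and $b,y\in B$ with $aRb$: - (F1) $p\partial(a,b)=b$; - (F2) $aRp(a)$ (this holds for all $a\in A$); - (F3) $\partial(a,b)Ry\Rightarrow aRy$. Such a fibrous preorder is called spatial if there exist maps $s\colon B\to A$ and $m\colon A\times_BA\to A$, where $A\times_BA=\{(a,a')\in A\times A\mid p(a)=p(a')\}$, such that for all $a,a'\in A$ with $p(a)=p(a')$ and all $y\in B$: - (F4) $ps(y)=y$; - (F5) $pm(a,a')=p(a)$; - (F6) $m(a,a')Ry\Rightarrow (aRy \text{ and } a'Ry)$. Spatiality is a property; $s$ and $m$ are not part of the data. Given fibrous preorders $\mathbf{A}=(R,A,B,p,\partial)$ and $\mathbf{A}'=(R',A',B',p',\partial')$, a fibrous morphism $\mathbf{A}\to\mathbf{A}'$ is a pair $(f,f^* )$ with $f\colon B\to B'$ a map and $f^*\colon A'_f\to A$ a map, where $A'_f=\{(a',b)\in A'\times B\mid p'(a')=f(b)\}$. These must satisfy, for all $(a',b)\in A'_f$ and $y\in B$: - $pf^*(a',b)=b$; - $f^*(a',b)Ry\Rightarrow a'R'f(y)$. Composition is $(g,g^* )\circ(f,f^* )=(gf,h)$ with $h(a'',b)=f^*(g^*(a'',f(b)),b)$. Two fibrous preorders $(R,A,B,p,\partial)$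 and $(R',A',B',p',\partial')$ are equivalent if $B=B'$ and the identity map $1_B$ underlies a fibrous morphism in each direction. Equivalently: $B=B'$ and there exist maps $\varphi\colon A\to A'$ and $\gamma\colon A'\to A$ with $p'\varphi=p$ and $p\gamma=p'$ such that, for all $a\in A$, $a'\in A'$ and $b\in B$, $\varphi(a)R'b\Rightarrow aRb$ and $\gamma(a')Rb\Rightarrow a'R'b$. *)

Set Implicit Arguments.

Record FibPreord (B : Type) := {
  fp_A : Type;
  fp_p : fp_A -> B;
  fp_R : fp_A -> B -> Prop;
  (* ∂ : R -> A, R viewed as the set of pairs (a,b) with aRb *)
  fp_d : forall (a : fp_A) (b : B), fp_R a b -> fp_A
}.
Arguments fp_A {B}. Arguments fp_p {B}. Arguments fp_R {B}. Arguments fp_d {B}.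

Definition is_fibrous (B : Type) (X : FibPreord B) : Prop :=
  (forall a b (h : fp_R X a b), fp_p X (fp_d X a b h) = b) /\          (* F1 *)
  (forall a, fp_R X a (fp_p X a)) /\                                    (* F2 *)
  (forall a b (h : fp_R X a b) y,
      fp_R X (fp_d X a b h) y -> fp_R X a y).                           (* F3 *)

Definition spatial (B : Type) (X : FibPreord B) : Prop :=
  exists (s : B -> fp_A X)
         (m : forall a a' : fp_A X, fp_p X a = fp_p X a' -> fp_A X),
    (forall y, fp_p X (s y) = y) /\
    (forall a a' (e : fp_p X a = fp_p X a'), fp_p X (m a a' e) = fp_p X a) /\
    (forall a a' (e : fp_p X a = fp_p X a') y,
        fp_R X (m a a' e) y -> fp_R X a y /\ fp_R X a' y).

(** Fibrous morphism (f, f^* ) : X -> Y, where f^* is defined on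
    A'_f = {(a',b) | p'(a') = f(b)}. *)
Definition is_fib_morphism (B B' : Type) (X : FibPreord B) (Y : FibPreord B')
  (f : B -> B') (fs : forall (a' : fp_A Y) (b : B), fp_p Y a' = f b -> fp_A X) : Prop :=
  (forall a' b (e : fp_p Y a' = f b), fp_p X (fs a' b e) = b) /\
  (forall a' b (e : fp_p Y a' = f b) y,
      fp_R X (fs a' b e) y -> fp_R Y a' (f y)).

Definition fib_equivalent (B : Type) (X Y : FibPreord B) : Prop :=
  (exists fs : forall (a' : fp_A Y) (b : B), fp_p Y a' = b -> fp_A X,
      is_fib_morphism X Y (fun b => b) fs) /\
  (exists gs : forall (a : fp_A X) (b : B), fp_p X a = b -> fp_A Y,
      is_fib_morphism Y X (fun b => b) gs).

Record Top := {
  carrier : Type;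
  isOpen : (carrier -> Prop) -> Prop
}.

Definition is_topology (T : Top) : Prop :=
  isOpen T (fun _ => True) /\
  (forall U V, isOpen T U -> isOpen T V -> isOpen T (fun x => U x /\ V x)) /\
  (forall S : (carrier T -> Prop) -> Prop,
      (forall U, S U -> isOpen T U) -> isOpen T (fun x => exists U, S U /\ U x)).

Definition continuous (T T' : Top) (f : carrier T -> carrier T') : Prop :=
  forall O, isOpen T' O -> isOpen T (fun x => O (f x)).

Definition F_open (B : Type) (X : FibPreord B) (O : B -> Prop) : Prop :=
  forall y, O y -> exists a, fp_p X a = y /\ (forall z, fp_R X a z -> O z).

Definition F_obj (B : Type) (X : FibPreord B) : Top :=
  {| carrier := B; isOpen := F_open X |}.
(* On morphisms, F (f, f^* ) = f. *)

Definition G_A (T : Top) : Type :=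
  { ux : (carrier T -> Prop) * carrier T | isOpen T (fst ux) /\ fst ux (snd ux) }.

Definition G_obj (T : Top) : FibPreord (carrier T) :=
  {| fp_A := G_A T;
     fp_p := fun a => snd (proj1_sig a);
     fp_R := fun a y => fst (proj1_sig a) y;
     fp_d := fun a y h =>
       exist _ (fst (proj1_sig a), y) (conj (proj1 (proj2_sig a)) h) |}.

(* f^*((U',x'), y) = (f^{-1}(U'), y) when x' = f y; the first component of G(f) is f. *)
Definition G_mor (T T' : Top) (f : carrier T -> carrier T') (hf : continuous T T' f)
  (a' : G_A T') (b : carrier T) (e : snd (proj1_sig a') = f b) : G_A T :=
  exist _ ((fun z => fst (proj1_sig a') (f z)), b)
    (conj (hf _ (proj1 (proj2_sig a')))
          (eq_ind _ (fun w => fst (proj1_sig a') w) (proj2 (proj2_sig a')) _ e)).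

(** For a fibrous preorder X with projection p, call
    N(a) = {y | a R y} the basic neighbourhood of a; F(X) declares a set open
    when each of its points y has some a over y with N(a) inside it.
    - F(X) is a topology as soon as X is spatial: s gives the whole space and
      m intersects two basic neighbourhoods over the same point; unions are free.
    - Any fibrous morphism (f, f^* ) pulls basic neighbourhoods back along f^*,
      so f is continuous; no further hypothesis is needed.
    - G(T) is fibrous for every T, spatial when T is closed under the whole
      space and binary intersections, and G(f) is a fibrous morphism for every
      continuous f.
    - F G = 1 because a set is a union of open sets inside it exactly when it
      is open ([open_of_local_open]).
    - G F ~ 1: by (F1) and (F3) each N(a) is F-open ([nbhd_F_open]), so
      a |-> (N(a), p a) maps X into G F X; conversely, choice picks for an
      F-open U containing x some a over x with N(a) inside U. *)
From Stdlib Require Import FunctionalExtensionality PropExtensionality ClassicalEpsilon.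

Set Implicit Arguments.
Unset Strict Implicit.

Definition nbhd (B : Type) (X : FibPreord B) (a : fp_A X) : B -> Prop := fp_R X a.
Arguments nbhd {B} X a.

Section FunctorF.

Variable B : Type.
Variable X : FibPreord B.

Lemma F_obj_topology : spatial X -> is_topology (F_obj X).
Proof.
  intros [s [m [Hs [Hm_p Hm_R]]]]. split; [| split].
  - intros y _. exists (s y). auto.
  - intros U V HU HV y [Uy Vy].
    destruct (HU y Uy) as [a [pa Na]]. destruct (HV y Vy) as [a' [pa' Na']].
    assert (e : fp_p X a = fp_p X a') by congruence.
    exists (m a a' e). split.
    + rewrite Hm_p. exact pa.
    + intros z Hz. destruct (Hm_R _ _ _ _ Hz). auto.
  - intros S HS y [U [SU Uy]].
    destruct (HS U SU y Uy) as [a [pa Na]].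
    exists a. split; [exact pa |]. intros z Hz. exists U. auto.
Qed.

(** In a fibrous preorder, basic neighbourhoods are F-open: an element over
    y in N(a) is provided by ∂, and (F3) keeps its neighbourhood inside N(a). *)
Lemma nbhd_F_open : is_fibrous X -> forall a, F_open X (nbhd X a).
Proof.
  intros [Hd_p [_ Hd_R]] a y Hy. exists (fp_d X a y Hy). split.
  - apply Hd_p.
  - intros z Hz. exact (Hd_R a y Hy z Hz).
Qed.

Definition basic_witness (O : B -> Prop) (y : B) (HO : F_open X O) (Oy : O y) :
  fp_A X :=
  proj1_sig (constructive_indefinite_description _ (HO y Oy)).

Lemma basic_witness_spec (O : B -> Prop) (y : B) (HO : F_open X O) (Oy : O y) :
  fp_p X (basic_witness HO Oy) = y /\
  (forall z, nbhd X (basic_witness HO Oy) z -> O z).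
Proof.
  unfold basic_witness.
  destruct (constructive_indefinite_description _ _) as [a Ha]. exact Ha.
Qed.

End FunctorF.

(** F is well defined on morphisms: the base map of a fibrous morphism is
    continuous, since f^* carries a basic neighbourhood witnessing openness
    at f(y) to one at y. *)
Lemma fib_morphism_continuous (B B' : Type) (X : FibPreord B) (Y : FibPreord B')
    (f : B -> B') (fs : forall (a' : fp_A Y) (b : B), fp_p Y a' = f b -> fp_A X) :
  is_fib_morphism X Y f fs -> continuous (F_obj X) (F_obj Y) f.
Proof.
  intros [Hfs_p Hfs_R] O HO y Oy.
  destruct (HO (f y) Oy) as [a' [pa Na]].
  exists (fs a' y pa). split; [apply Hfs_p |].
  intros z Hz. apply Na. exact (Hfs_R a' y pa z Hz).
Qed.

Section FunctorG.

Variable T : Top.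

(** G(T) is a fibrous preorder for every T: ∂ only moves the base point. *)
Lemma G_obj_fibrous : is_fibrous (G_obj T).
Proof.
  split; [| split]; simpl.
  - reflexivity.
  - intros a. exact (proj2 (proj2_sig a)).
  - auto.
Qed.

(** G(T) is spatial: s(x) = (whole space, x), m((U,x),(V,x)) = (U ∩ V, x). *)
Lemma G_obj_spatial : is_topology T -> spatial (G_obj T).
Proof.
  intros [Htop [Hinter _]].
  exists (fun y => exist _ ((fun _ => True), y) (conj Htop I)).
  unshelve eexists.
  { intros a a' e.
    refine (exist _ ((fun z => fst (proj1_sig a) z /\ fst (proj1_sig a') z),
                     snd (proj1_sig a)) _).
    split; simpl.
    - apply Hinter; [exact (proj1 (proj2_sig a)) | exact (proj1 (proj2_sig a'))].
    - split; [exact (proj2 (proj2_sig a)) |].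
      simpl in e. rewrite e. exact (proj2 (proj2_sig a')). }
  simpl. auto.
Qed.

(** A set each of whose points has an open neighbourhood inside it is open:
    it is the union of those neighbourhoods. *)
Lemma open_of_local_open (O : carrier T -> Prop) :
  is_topology T ->
  (forall x, O x -> exists U, isOpen T U /\ U x /\ forall z, U z -> O z) ->
  isOpen T O.
Proof.
  intros [_ [_ Hunion]] Hloc.
  assert (E : O = (fun x => exists U, (isOpen T U /\ forall z, U z -> O z) /\ U x)).
  { apply functional_extensionality; intro x; apply propositional_extensionality.
    split.
    - intros Ox. destruct (Hloc x Ox) as [U [HU [Ux HUO]]]. exists U. auto.
    - intros [U [[_ HUO] Ux]]. auto. }
  rewrite E. apply Hunion. intros U [HU _]. exact HU.
Qed.

Lemma F_G_open (O : carrier T -> Prop) :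
  is_topology T -> (isOpen (F_obj (G_obj T)) O <-> isOpen T O).
Proof.
  intros Htop. simpl. split.
  - intros HO. apply open_of_local_open; [exact Htop |].
    intros x Ox. destruct (HO x Ox) as [[[U y] [HU Uy]] [py HUO]].
    simpl in *. subst y. exists U. auto.
  - intros HO y Oy. exists (exist _ (O, y) (conj HO Oy)). simpl. auto.
Qed.

End FunctorG.

Lemma G_mor_fib_morphism (T T' : Top) (f : carrier T -> carrier T')
    (hf : continuous T T' f) :
  is_fib_morphism (G_obj T) (G_obj T') f (G_mor hf).
Proof. split; simpl; auto. Qed.

Section GFEquivalence.

Variable B : Type.
Variable X : FibPreord B.
Hypothesis X_fibrous : is_fibrous X.

(** The fibrous morphism X -> G F X over the identity: its pullback sends
    (U, x) with x = b to an element over b whose basic neighbourhood lies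
    in U. *)
Lemma X_to_GF_morphism : exists fs : forall (a' : fp_A (G_obj (F_obj X))) (b : B),
                  fp_p (G_obj (F_obj X)) a' = b -> fp_A X,
    is_fib_morphism X (G_obj (F_obj X)) (fun b => b) fs.
Proof.
  exists (fun a' b e =>
    basic_witness (proj1 (proj2_sig a'))
      (eq_ind _ (fst (proj1_sig a')) (proj2 (proj2_sig a')) b e)).
  split; intros a' b e; apply basic_witness_spec.
Qed.

(** The fibrous morphism G F X -> X over the identity: its pullback sends
    a over b to (N(a), b). *)
Lemma GF_to_X_morphism : exists gs : forall (a : fp_A X) (b : B), fp_p X a = b ->
                  fp_A (G_obj (F_obj X)),
    is_fib_morphism (G_obj (F_obj X)) X (fun b => b) gs.
Proof.
  unshelve eexists.
  { intros a b e. refine (exist _ (nbhd X a, b) (conj _ _)); simpl.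
    - apply nbhd_F_open. exact X_fibrous.
    - rewrite <- e. exact (proj1 (proj2 X_fibrous) a). }
  split; simpl; auto.
Qed.

Lemma G_F_equivalent : fib_equivalent (G_obj (F_obj X)) X.
Proof. exact (conj GF_to_X_morphism X_to_GF_morphism). Qed.

End GFEquivalence.

Theorem mainTheorem1 :
  (* F is well defined on objects: F(A) is a topological space *)
  (forall (B : Type) (X : FibPreord B),
      is_fibrous X -> spatial X -> is_topology (F_obj X)) /\
  (* F is well defined on morphisms: F(f, f^* ) = f is continuous *)
  (forall (B B' : Type) (X : FibPreord B) (Y : FibPreord B')
          (f : B -> B') (fs : forall (a' : fp_A Y) (b : B), fp_p Y a' = f b -> fp_A X),
      is_fibrous X -> spatial X -> is_fibrous Y -> spatial Y ->
      is_fib_morphism X Y f fs ->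
      continuous (F_obj X) (F_obj Y) f) /\
  (* G is well defined on objects: G(B, tau) is a spatial fibrous preorder *)
  (forall T : Top, is_topology T -> is_fibrous (G_obj T) /\ spatial (G_obj T)) /\
  (* G is well defined on morphisms: G(f) = (f, f^* ) is a fibrous morphism *)
  (forall (T T' : Top) (f : carrier T -> carrier T') (hf : continuous T T' f),
      is_topology T -> is_topology T' ->
      is_fib_morphism (G_obj T) (G_obj T') f (G_mor hf)) /\
  (* F G = 1 on objects *)
  (forall T : Top, is_topology T ->
      forall O : carrier T -> Prop, isOpen (F_obj (G_obj T)) O <-> isOpen T O) /\
  (* G F ~ 1 *)
  (forall (B : Type) (X : FibPreord B),
      is_fibrous X -> spatial X -> fib_equivalent (G_obj (F_obj X)) X).
Proof.
  split; [| split; [| split; [| split; [| split]]]].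
  - intros B X _ Hsp. exact (F_obj_topology Hsp).
  - intros B B' X Y f fs _ _ _ _ Hmor. exact (fib_morphism_continuous Hmor).
  - intros T Htop. exact (conj (G_obj_fibrous T) (G_obj_spatial Htop)).
  - intros T T' f hf _ _. apply G_mor_fib_morphism.
  - intros T Htop O. exact (F_G_open O Htop).
  - intros B X Hfib _. exact (G_F_equivalent Hfib).
Qed.
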